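(* Let $\mathbf{s}$ be a binary sequence that is not ultimately periodic, and let $p_{\mathbf{s}}(N)$ denote the number of distinct factors of length $N$ of $\mathbf{s}$. Then for all integers $k\ge1$ and $N\ge1$, $C_{2k}(\mathbf{s},\,2k\,p_{\mathbf{s}}(N))\ge N$.
   Context: Correlation measure: for $\mathbf{s}$ over $\{0,1\}$, an integer $r\ge1$, $D=(d_1,\dots,d_r)\in\mathbb{N}^r$ with $0\le d_1<\cdots<d_r$ and $M\in\mathbb{N}$, put $V(\mathbf{s},M,D)=\sum_{n=0}^{M-1}(-1)^{\mathbf{s}(n+d_1)+\cdots+\mathbf{s}(n+d_r)}$, and $C_r(\mathbf{s},N)=\max_{M,D}|V(\mathbf{s},M,D)|$ over all such $D$ and integers $M$ with $M+d_r\le N$. A factor of length $N$ of $\mathbf{s}$ is a word $\mathbf{s}(i)\mathbf{s}(i+1)\cdots\mathbf{s}(i+N-1)$ for some $i\ge0$. *)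

From mathcomp Require Import all_boot all_order all_algebra.
From mathcomp Require Import boolp.
Set Implicit Arguments. Unset Strict Implicit. Unset Printing Implicit Defensive.
Import Order.TTheory GRing.Theory Num.Theory.

(* A binary sequence is s : nat -> bool (true = 1, false = 0). *)

Definition ult_periodic (s : nat -> bool) : Prop :=
  exists p n0 : nat, 0 < p /\ forall n, n0 <= n -> s (n + p) = s n.

Definition factor (s : nat -> bool) (N i : nat) : N.-tuple bool :=
  [tuple s (i + j) | j < N].

Definition factor_complexity (s : nat -> bool) (N : nat) : nat :=
  #|[set w : N.-tuple bool | `[< exists i, w = factor s N i >] ]|.

Definition Vcorr (s : nat -> bool) (M : nat) (D : seq nat) : int :=
  (\sum_(n < M) (-1) ^+ (\sum_(d <- D) (s (n + d) : nat)))%R.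

(* C_r(s, N) = max |V(s,M,D)| over D = (d_1 < ... < d_r) with d_i in nat
   and M in nat with M + d_r <= N.  All such d_i and M are <= N, so we
   range over r-tuples of 'I_(N+1) and M < N+1 (max of empty family = 0). *)
Definition Ccorr (r : nat) (s : nat -> bool) (N : nat) : nat :=
  \max_(M < N.+1)
    \max_(D : r.-tuple 'I_N.+1 |
           sorted ltn (map val D) && (M + last 0 (map val D) <= N))
      `|Vcorr s M (map val D)|%N.
Arguments Ccorr : clear implicits.
Arguments factor_complexity : clear implicits.
Arguments Vcorr : clear implicits.

(** Among [p_s(N) + 2k] starting positions, pigeonhole yields two with the
    same factor of length [N]; removing them and repeating gives [k] disjoint
    pairs of positions carrying equal factors.  For the [2k] positions [D] so
    obtained, every exponent [s(n+d_1) + ... + s(n+d_2k)] with [n < N] is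
    even, so [V(s, N, D) = N].  The Morse–Hedlund theorem ([p_s(N) > N] for
    aperiodic [s]) guarantees that [N + max D] fits inside [2k p_s(N)]. *)

From mathcomp Require Import all_boot all_order all_algebra.
From mathcomp Require Import boolp.
From mathcomp Require Import zify.
Import GRing.Theory.

Lemma sorted_leq_last (D : seq nat) d : sorted leq D -> d \in D -> d <= last 0 D.
Proof.
move=> sortD dD; have ltdD : index d D < size D by rewrite index_mem.
rewrite -(nth_index 0 dD) -nth_last; apply: sorted_leq_nth => //.
- exact: leq_trans.
- by rewrite inE prednK // (leq_ltn_trans _ ltdD).
- by rewrite -ltnS prednK // (leq_ltn_trans _ ltdD).
Qed.

Section Factors.
Variable s : nat -> bool.

Definition factor_set n :=
  [set w : n.-tuple bool | `[< exists i, w = factor s n i >] ].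

Lemma card_factor_set n : #|factor_set n| = factor_complexity s n.
Proof. by []. Qed.

Lemma mem_factor_set n i : factor s n i \in factor_set n.
Proof. by rewrite inE; apply/asboolP; exists i. Qed.

Lemma factor_setP n w : w \in factor_set n -> exists i, w = factor s n i.
Proof. by rewrite inE => /asboolP. Qed.

Lemma eq_factorP n i j :
  factor s n i = factor s n j <-> forall l, l < n -> s (i + l) = s (j + l).
Proof.
split=> [e l ltln | eqs].
  by have := congr1 (fun w => tnth w (Ordinal ltln)) e; rewrite !tnth_mktuple.
by apply: eq_from_tnth => l; rewrite !tnth_mktuple; apply: eqs.
Qed.

Lemma factor_collision {n} {X : seq nat} :
  uniq X -> factor_complexity s n < size X ->
  exists x y, [/\ x \in X, y \in X, x != y & factor s n x = factor s n y].
Proof.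
move=> uniqX ltpX.
have [//|noColl] := pselect (exists x y,
  [/\ x \in X, y \in X, x != y & factor s n x = factor s n y]).
have injX : {in X &, injective (factor s n)}.
  move=> x y xX yX e; case: (eqVneq x y) => // neq.
  by case: noColl; exists x, y.
have /card_uniqP : uniq (map (factor s n) X) by rewrite map_inj_in_uniq.
rewrite size_map => cardX.
have : #|map (factor s n) X| <= #|factor_set n|.
  by apply/subset_leq_card/subsetP => _ /mapP [x _ ->]; apply: mem_factor_set.
by rewrite cardX card_factor_set leqNgt ltpX.
Qed.

Lemma ult_periodic_of_repeat n i j :
  (forall a b, (forall l, l < n -> s (a + l) = s (b + l)) ->
     s (a + n) = s (b + n)) ->
  i < j -> (forall l, l < n -> s (i + l) = s (j + l)) -> ult_periodic s.
Proof.
move=> ext ltij eqij.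
have eqL L l : l < n + L -> s (i + l) = s (j + l).
  elim: L l => [|L IH] l ltl; first by apply: eqij; rewrite addn0 in ltl.
  have [|gel] := ltnP l (n + L); first exact: IH.
  have -> : l = L + n by lia.
  by rewrite !addnA; apply: ext => l' ltl'; rewrite -!addnA; apply: IH; lia.
exists (j - i), i; split=> [|m lem]; first lia.
have := eqL (m - i).+1 (m - i) (ltac:(lia)).
have -> : j + (m - i) = m + (j - i) by lia.
by rewrite subnKC // => ->.
Qed.

Definition tprefix {n} (w : n.+1.-tuple bool) : n.-tuple bool :=
  [tuple tnth w (widen_ord (leqnSn n) j) | j < n].

Lemma tprefix_factor n i : tprefix (factor s n.+1 i) = factor s n i.
Proof. by apply: eq_from_tnth => j; rewrite !tnth_mktuple. Qed.

(* If no length-[n] factor has two extensions, the next letter is a function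
   of the preceding [n] letters; a repeated factor then forces a period. *)
Lemma ult_periodic_of_complexity_le n :
  factor_complexity s n.+1 <= factor_complexity s n -> ult_periodic s.
Proof.
move=> lepn.
have tprefix_onto : factor_set n \subset tprefix @: factor_set n.+1.
  apply/subsetP => _ /factor_setP [i ->].
  by rewrite -tprefix_factor imset_f ?mem_factor_set.
have inj_tprefix : {in factor_set n.+1 &, injective tprefix}.
  apply/imset_injP; rewrite eqn_leq leq_imset_card /=.
  exact: leq_trans lepn (subset_leq_card tprefix_onto).
have ext a b : (forall l, l < n -> s (a + l) = s (b + l)) ->
    s (a + n) = s (b + n).
  move=> eqab; suff /eq_factorP -> : factor s n.+1 a = factor s n.+1 b by [].
  apply: inj_tprefix; rewrite ?mem_factor_set // !tprefix_factor.
  exact/eq_factorP.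
have [x [y [_ _ neqxy /eq_factorP eqxy]]] :=
  factor_collision (iota_uniq 0 (factor_complexity s n).+1)
    (ltac:(by rewrite size_iota)).
case: (ltngtP x y) => [ltxy|ltyx|exy].
- exact: ult_periodic_of_repeat ext ltxy eqxy.
- by apply: ult_periodic_of_repeat ext ltyx _ => l /eqxy.
- by rewrite exy eqxx in neqxy.
Qed.

Lemma factor_complexity_gt : ~ ult_periodic s -> forall n, n < factor_complexity s n.
Proof.
move=> aper; elim=> [|n IH].
  by rewrite -card_factor_set card_gt0; apply/set0Pn; exists (factor s 0 0);
    apply: mem_factor_set.
rewrite ltnNge; apply/negP => le; apply: aper.
by apply: (@ult_periodic_of_complexity_le n); lia.
Qed.

Lemma paired_positions N k (X : seq nat) :
  uniq X -> factor_complexity s N + 2 * k <= size X ->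
  exists D : seq nat, [/\ size D = 2 * k, uniq D, {subset D <= X} &
     forall n, n < N -> ~~ odd (\sum_(d <- D) s (n + d))].
Proof.
elim: k X => [|k IH] X uniqX leX.
  by exists [::]; split=> // n _; rewrite big_nil.
have ltpX : factor_complexity s N < size X by lia.
have [x [y [xX yX neqxy eqxy]]] := factor_collision uniqX ltpX.
set X' := rem y (rem x X).
have uniqX' : uniq X' by rewrite !rem_uniq.
have y_remx : y \in rem x X by rewrite (mem_rem_uniq _ uniqX) inE eq_sym neqxy.
have sizeX' : size X' = (size X).-2 by rewrite !size_rem.
have leX' : factor_complexity s N + 2 * k <= size X' by rewrite sizeX'; lia.
have [D [sizeD uniqD subDX' evenD]] := IH X' uniqX' leX'.
exists [:: x, y & D]; split.
- by rewrite /= sizeD; lia.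
- rewrite /= uniqD in_cons negb_or neqxy andbT /=.
  apply/andP; split; apply/negP => /subDX'.
    by move/mem_rem; rewrite (mem_rem_uniq _ uniqX) inE eqxx.
  by rewrite (mem_rem_uniq _ (rem_uniq _ uniqX)) inE eqxx.
- move=> z; rewrite !in_cons => /predU1P [-> //|/predU1P [-> //|]].
  by move/subDX'/mem_rem/mem_rem.
- move=> n ltnN; rewrite !big_cons !oddD.
  move/eq_factorP/(_ n ltnN): eqxy; rewrite addnC [y + n]addnC => ->.
  by rewrite addbA addbb; apply: evenD.
Qed.

Lemma Vcorr_perm M [D D' : seq nat] : perm_eq D D' -> Vcorr s M D = Vcorr s M D'.
Proof. by move=> pD; apply: eq_bigr => n _; rewrite (perm_big _ pD). Qed.

Lemma Vcorr_even [M] [D : seq nat] :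
  (forall n, n < M -> ~~ odd (\sum_(d <- D) s (n + d))) -> Vcorr s M D = Posz M.
Proof.
move=> evenD; rewrite -natz -[M in RHS]card_ord -sumr_const.
by apply: eq_bigr => n _; rewrite -signr_odd (negbTE (evenD n (ltn_ord n))).
Qed.

Lemma Vcorr_le_Ccorr r N M (D : seq nat) :
  size D = r -> sorted ltn D -> M + last 0 D <= N ->
  `|Vcorr s M D|%N <= Ccorr r s N.
Proof.
move=> sizeD sortD leN.
have ltD d : d \in D -> d < N.+1.
  move=> dD; rewrite ltnS; apply: leq_trans leN; apply: leq_trans (leq_addl M _).
  exact: sorted_leq_last (sub_sorted ltnW sortD) dD.
have sizeD' : size (map (@inord N) D) == r by rewrite size_map sizeD.
have valD : map val (Tuple sizeD') = D.
  by rewrite /= -map_comp -[RHS]map_id; apply/eq_in_map => d /ltD /inordK.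
have ltMN : M < N.+1 by rewrite ltnS (leq_trans (leq_addr _ _) leN).
apply: (bigmax_sup (Ordinal ltMN)) => //.
by apply: (bigmax_sup (Tuple sizeD')); rewrite valD // sortD leN.
Qed.

End Factors.

Theorem mainTheorem6 (s : nat -> bool) :
  ~ ult_periodic s ->
  forall k N : nat, 1 <= k -> 1 <= N ->
    N <= Ccorr (2 * k) s (2 * k * factor_complexity s N).
Proof.
move=> aper k N k_gt0 _.
set P := factor_complexity s N.
have ltNP : N < P := @factor_complexity_gt s aper N.
have [D [sizeD uniqD subD evenD]] :=
  @paired_positions s N k _ (iota_uniq 0 (P + 2 * k)) (ltac:(by rewrite size_iota)).
have sorted_sortD : sorted ltn (sort leq D).
  by rewrite ltn_sorted_uniq_leq sort_uniq uniqD (sort_sorted leq_total).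
have lastD : last 0 (sort leq D) < P + 2 * k.
  have := mem_last 0 (sort leq D); rewrite in_cons => /predU1P [-> | ]; first lia.
  by rewrite mem_sort => /subD; rewrite mem_iota.
apply: leq_trans (@Vcorr_le_Ccorr s _ _ N _ _ sorted_sortD _).
- by rewrite (Vcorr_perm _ _ (permEl (perm_sort leq D))) (Vcorr_even _ evenD).
- by rewrite size_sort.
- nia.
Qed.
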